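(* Let $N=\{1,\dots,n\}$ with $n\ge 2$ and let $\mathcal{D}=\mathbb{R}^n_+$ be the domain of profiles of inflows. A rule $R:\mathcal{D}\to\mathbb{R}^n_+$ satisfies scale invariance, downstream impartiality, upstream invariance, and balance if and only if it is the Shapley rule, i.e. for each $e\in\mathcal{D}$ and each $i\in N$, $$R_i(e)=\sum_{j\le i}\frac{e_j}{n-j+1}.$$
   Context: Agents $1,\dots,n$ are located along a linear river, lower index meaning more upstream; agent $i$ has river inflow $e_i\ge 0$, and $e=(e_1,\dots,e_n)\in\mathcal{D}=\mathbb{R}^n_+$. An allocation for $e$ is $x\in\mathbb{R}^n_+$ with $\sum_{i=1}^n x_i=\sum_{i=1}^n e_i$ and $\sum_{i=1}^k x_i\le\sum_{i=1}^k e_i$ for each $k=1,\dots,n-1$. A rule is a map $R:\mathcal{D}\to\mathbb{R}^n_+$ assigning to each $e$ an allocation $R(e)$ for $e$. Axioms: Scale invariance: for each $e\in\mathcal{D}$ and each $\gamma\in\mathbb{R}_+$, $R(\gamma e)=\gamma R(e)$. Upstream invariance: for each $e,e'\in\mathcal{D}$ such that $e_i<e'_i$ for some $i\in N$ and $e_j=e'_j$ for all $j\ne i$, we have $R_k(e)=R_k(e')$ for each $k<i$. Downstream impartiality: for each $e,e'\in\mathcal{D}$ such that $e_i<e'_i$ for some $i\in N$ and $e_j=e'_j$ for all $j\ne i$, and for each $k,l>i$ with $e_k=e_l$, we have $R_k(e')-R_k(e)=R_l(e')-R_l(e)$. Balance: for each $e\in\mathcal{D}$ such that $e_i>0$ for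 some $i\in\{1,\dots,n-1\}$ and $e_j=0$ for all $j\ne i$, $R_i(e)=\frac{1}{n-i}\sum_{k>i}R_k(e)$. *)

From HB Require Import structures.
From mathcomp Require Import all_boot all_order all_algebra.
From mathcomp Require Import reals.
Set Implicit Arguments. Unset Strict Implicit. Unset Printing Implicit Defensive.
Import Order.TTheory GRing.Theory Num.Theory.
Local Open Scope ring_scope.

(* Agents are indexed 0..n-1 (agent i here is agent i+1 of the paper);
   lower index = more upstream. A profile is a function 'I_n -> R. *)

Section River.
Variables (R : realType) (n : nat).

Definition profile := 'I_n -> R.

Definition inD (e : profile) : Prop := forall i, 0 <= e i.

Definition allocation (e x : profile) : Prop :=
  (forall i, 0 <= x i) /\
  \sum_(i < n) x i = \sum_(i < n) e i /\
  (forall k : nat, (k < n.-1)%N ->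
     \sum_(i < n | (i <= k)%N) x i <= \sum_(i < n | (i <= k)%N) e i).

Definition is_rule (Rl : profile -> profile) : Prop :=
  forall e, inD e -> allocation e (Rl e).

Definition scale_invariance (Rl : profile -> profile) : Prop :=
  forall e, inD e -> forall g : R, 0 <= g ->
    forall i, Rl (fun j => g * e j) i = g * Rl e i.

Definition increase_at (e e' : profile) (i : 'I_n) : Prop :=
  e i < e' i /\ forall j, j != i -> e j = e' j.

Definition upstream_invariance (Rl : profile -> profile) : Prop :=
  forall e e', inD e -> inD e' -> forall i, increase_at e e' i ->
    forall k : 'I_n, (k < i)%N -> Rl e k = Rl e' k.

Definition downstream_impartiality (Rl : profile -> profile) : Prop :=
  forall e e', inD e -> inD e' -> forall i, increase_at e e' i ->
    forall k l : 'I_n, (i < k)%N -> (i < l)%N -> e k = e l ->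
      Rl e' k - Rl e k = Rl e' l - Rl e l.

(* paper index i (1-based) in {1..n-1} is 0-based i < n-1; n - i (paper)
   becomes n - (i+1) here; agents k > i. *)
Definition balance (Rl : profile -> profile) : Prop :=
  forall e, inD e -> forall i : 'I_n, (i < n.-1)%N -> 0 < e i ->
    (forall j, j != i -> e j = 0) ->
    Rl e i = (n - i.+1)%:R^-1 * \sum_(k < n | (i < k)%N) Rl e k.

(* Shapley rule: paper R_i(e) = sum_{j<=i} e_j/(n-j+1) (1-based);
   0-based: sum_{j<=i} e_j/(n-j). *)
Definition shapley (e : profile) (i : 'I_n) : R :=
  \sum_(j < n | (j <= i)%N) e j / (n - j)%:R.

End River.

From mathcomp Require Import all_boot all_order all_algebra.
From mathcomp Require Import reals boolp.
From mathcomp Require Import zify lra.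
Set Implicit Arguments.
Unset Strict Implicit.
Unset Printing Implicit Defensive.
Import Order.TTheory GRing.Theory Num.Theory.
Local Open Scope ring_scope.

(* A change in the inflow of one agent leaves the agents upstream of it
   untouched and shifts equally all downstream agents with equal inflows.
   Chaining such one-agent changes, the allocation of the agents up to [i]
   depends only on the inflows up to [i], and replacing the inflows upstream
   of [i] in a profile that is constant from [i] on shifts all agents from
   [i] on by a common amount.  For a single inflow [c] at [i], balance and
   efficiency give each agent from [i] on exactly [c / (n - i)].  By
   induction on [i], truncating [e] to [e_0, ..., e_(i-1), e_i, e_i, ...]
   and comparing it with [0, ..., 0, e_i, e_i, ...], efficiency then fixes
   the common shift, which is the Shapley increment. *)

Section SumFacts.
Variables (R : realType) (n : nat).
Implicit Types (F : 'I_n -> R) (c : R).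

Lemma sum_ord_geq_const (i : nat) c : \sum_(k < n | (i <= k)%N) c = c *+ (n - i).
Proof. by rewrite -sumr_const_nat big_geq_mkord. Qed.

Lemma sum_ord_leq_split F (j : 'I_n) :
  \sum_(k < n | (k <= j)%N) F k = \sum_(k < n | (k < j)%N) F k + F j.
Proof.
rewrite (bigD1 j) //= addrC; congr (_ + _); apply: eq_bigl => k.
by rewrite ltn_neqAle andbC.
Qed.

Lemma sum_ord_split_at F (i : nat) :
  \sum_(k < n) F k = \sum_(k < n | (k < i)%N) F k + \sum_(k < n | (i <= k)%N) F k.
Proof.
rewrite (bigID (fun k : 'I_n => (k < i)%N)) /=; congr (_ + _).
by apply: eq_bigl => k; rewrite -leqNgt.
Qed.

End SumFacts.

Section ShapleyFacts.
Variables (R : realType) (n : nat).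
Implicit Types (e : profile R n).

Lemma natr_sub_ord_neq0 (i : 'I_n) : (n - i)%:R != 0 :> R.
Proof. by rewrite pnatr_eq0 subn_eq0 -ltnNge. Qed.

Lemma shapley_partial_efficiency e (i : 'I_n) :
  \sum_(k < n | (k < i)%N) shapley e k + (n - i)%:R * shapley e i
  = \sum_(k < n | (k <= i)%N) e k.
Proof.
case: i => i; elim: i => [|i IH] hi.
  rewrite big_pred0 // add0r /shapley !(sum_ord_leq_split _ (Ordinal hi)) /=.
  by rewrite !big_pred0 // !add0r subn0 mulrC divfK // pnatr_eq0 -lt0n.
have hi' : (i < n)%N by apply: ltnW.
have hne := natr_sub_ord_neq0 (Ordinal hi).
have -> : shapley e (Ordinal hi) = shapley e (Ordinal hi') + e (Ordinal hi) / (n - i.+1)%:R.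
  by rewrite /shapley (sum_ord_leq_split _ (Ordinal hi)).
rewrite (sum_ord_leq_split (shapley e) (Ordinal hi')) (sum_ord_leq_split e (Ordinal hi)) /=.
rewrite -(IH hi') mulrDr [_ * (_ / _)]mulrC divfK //.
have -> : (n - i)%:R = (n - i.+1)%:R + 1 :> R by rewrite natr1; congr _%:R; lia.
lra.
Qed.

Lemma shapley_from_upstream_sum e (i : 'I_n) d :
  \sum_(k < n | (k < i)%N) shapley e k + d *+ (n - i) = \sum_(k < n | (k < i)%N) e k ->
  shapley e i = d + e i / (n - i)%:R.
Proof.
have m_neq0 := natr_sub_ord_neq0 i; move=> gap; apply: (mulfI m_neq0).
have := shapley_partial_efficiency e i; rewrite sum_ord_leq_split -gap -mulr_natl.
by rewrite mulrDr [_ * (e i / _)]mulrC divfK //; lra.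
Qed.

Lemma shapley_change_at e e' (i k : 'I_n) :
  (forall j, j != i -> e j = e' j) -> (i <= k)%N ->
  shapley e' k - shapley e k = (e' i - e i) / (n - i)%:R.
Proof.
move=> eq_off hik; rewrite /shapley -sumrB (bigD1 i) //= big1 ?addr0 ?mulrBl //.
by move=> j /andP[_ /eq_off ->]; rewrite subrr.
Qed.

Lemma shapley_point_inflow e (i k : 'I_n) :
  (forall j, j != i -> e j = 0) -> (i <= k)%N -> shapley e k = e i / (n - i)%:R.
Proof.
move=> zero_off hik; rewrite /shapley (bigD1 i) //= big1 ?addr0 //.
by move=> j /andP[_ /zero_off ->]; rewrite mul0r.
Qed.

Lemma shapley_eq_upstream e e' (k : 'I_n) :
  (forall j : 'I_n, (j <= k)%N -> e j = e' j) -> shapley e k = shapley e' k.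
Proof. by move=> eq_up; apply: eq_bigr => j /eq_up ->. Qed.

Lemma shapley0 (k : 'I_n) : shapley (fun=> 0 : R) k = 0.
Proof. by rewrite /shapley big1 // => j _; rewrite mul0r. Qed.

End ShapleyFacts.

Section Profiles.
Variables (R : realType) (n : nat).
Implicit Types (e : profile R n) (m : nat).

Definition splice m e e' : profile R n := fun j => if (j < m)%N then e' j else e j.

Definition point_inflow (i : 'I_n) (c : R) : profile R n :=
  fun j => if j == i then c else 0.

Lemma splice_inD m e e' : inD e -> inD e' -> inD (splice m e e').
Proof. by move=> De De' j; rewrite /splice; case: ifP. Qed.

Lemma splice0 e e' : splice 0 e e' = e.
Proof. by apply: funext => j; rewrite /splice ltn0. Qed.

Lemma splice_ord e e' : splice n e e' = e'.
Proof. by apply: funext => j; rewrite /splice ltn_ord. Qed.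

Lemma splice_geq m e e' (j : 'I_n) : (m <= j)%N -> splice m e e' j = e j.
Proof. by rewrite /splice leqNgt => /negbTE ->. Qed.

Lemma spliceS_off (m j : 'I_n) e e' :
  j != m -> splice m e e' j = splice m.+1 e e' j.
Proof.
rewrite -val_eqE => /negbTE jm.
by rewrite /splice [(j < m.+1)%N]ltnS [(j <= m)%N]leq_eqVlt jm.
Qed.

Lemma spliceS_eq (m : 'I_n) e e' : e m = e' m -> splice m.+1 e e' = splice m e e'.
Proof.
move=> em; apply: funext => j; case: (eqVneq j m) => [->|/spliceS_off //].
by rewrite /splice ltnn ltnSn.
Qed.

Lemma splice_ind (Q : profile R n -> profile R n -> Prop) e e' :
  (forall x y z, Q x y -> Q y z -> Q x z) -> Q e e ->
  (forall m : 'I_n, Q (splice m e e') (splice m.+1 e e')) -> Q e e'.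
Proof.
move=> Qtrans Qe Qstep; rewrite -(splice_ord e e').
suff: forall m, (m <= n)%N -> Q e (splice m e e') by apply.
elim=> [|m IH] hm; first by rewrite splice0.
exact: Qtrans (IH (ltnW hm)) (Qstep (Ordinal hm)).
Qed.

Lemma point_inflow_inD (i : 'I_n) c : 0 <= c -> inD (point_inflow i c).
Proof. by move=> c_ge0 j; rewrite /point_inflow; case: ifP. Qed.

Lemma point_inflow0 (i : 'I_n) : point_inflow i 0 = fun=> 0.
Proof. by apply: funext => j; rewrite /point_inflow; case: ifP. Qed.

Lemma agree_upto e e' (i : 'I_n) :
  (forall j : 'I_n, (j < i)%N -> e j = e' j) -> e i = e' i ->
  forall j : 'I_n, (j <= i)%N -> e j = e' j.
Proof. by move=> eq_lt eq_i j; rewrite leq_eqVlt => /orP[/eqP/val_inj -> // | /eq_lt]. Qed.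

End Profiles.

Section Uniqueness.
Variables (R : realType) (n : nat) (Rl : profile R n -> profile R n).
Implicit Types (e : profile R n).

Section OneAgentChanges.
Hypotheses (UI : upstream_invariance Rl) (DI : downstream_impartiality Rl).

Lemma upstream_invariance_off e e' (p : 'I_n) : inD e -> inD e' ->
  (forall j, j != p -> e j = e' j) -> forall k : 'I_n, (k < p)%N -> Rl e k = Rl e' k.
Proof.
move=> De De' eq_off k kp; case: (ltgtP (e p) (e' p)) => ep.
- exact: (UI De De' (conj ep eq_off) kp).
- have eq_off' j : j != p -> e' j = e j by move/eq_off.
  by rewrite (UI De' De (conj ep eq_off') kp).
- suff -> : e = e' by [].
  by apply: funext => j; case: (eqVneq j p) => [jp|/eq_off //]; rewrite jp.
Qed.

Lemma downstream_impartiality_off e e' (p : 'I_n) : inD e -> inD e' ->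
  (forall j, j != p -> e j = e' j) -> forall k l : 'I_n, (p < k)%N -> (p < l)%N ->
  e k = e l -> Rl e' k - Rl e k = Rl e' l - Rl e l.
Proof.
move=> De De' eq_off k l pk pl ekl; case: (ltgtP (e p) (e' p)) => ep.
- exact: (DI De De' (conj ep eq_off) pk pl ekl).
- have neq_p (j : 'I_n) : (p < j)%N -> j != p.
    by move=> pj; apply/eqP => jp; rewrite jp ltnn in pj.
  have := DI De' De (conj ep (fun j jp => esym (eq_off j jp))) pk pl.
  rewrite -!eq_off ?neq_p // => /(_ ekl); lra.
- suff -> : e = e' by rewrite !subrr.
  by apply: funext => j; case: (eqVneq j p) => [jp|/eq_off //]; rewrite jp.
Qed.

Lemma rule_agree_upstream (i : nat) e e' : inD e -> inD e' ->
  (forall j : 'I_n, (j <= i)%N -> e j = e' j) ->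
  forall k : 'I_n, (k <= i)%N -> Rl e k = Rl e' k.
Proof.
move=> De De' eq_up.
apply: (splice_ind (Q := fun x y => forall k : 'I_n, (k <= i)%N -> Rl x k = Rl y k)) => //.
  by move=> x y z xy yz k ki; rewrite xy ?yz.
move=> m; case: (ltnP i m) => [im|mi]; last by rewrite spliceS_eq // eq_up.
move=> k ki; apply: (upstream_invariance_off (p := m)); try exact: splice_inD.
  by move=> j; apply: spliceS_off.
exact: leq_ltn_trans ki im.
Qed.

Lemma rule_shift_downstream (i : nat) e e' : inD e -> inD e' ->
  (forall j : 'I_n, (i <= j)%N -> e j = e' j) ->
  (forall k l : 'I_n, (i <= k)%N -> (i <= l)%N -> e k = e l) ->
  forall k l : 'I_n, (i <= k)%N -> (i <= l)%N -> Rl e' k - Rl e k = Rl e' l - Rl e l.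
Proof.
move=> De De' eq_down e_const.
apply: (splice_ind (Q := fun x y => forall k l : 'I_n, (i <= k)%N -> (i <= l)%N ->
  Rl y k - Rl x k = Rl y l - Rl x l)) => [x y z xy yz k l ik il|k l _ _|m].
- by have := xy k l ik il; have := yz k l ik il; lra.
- by rewrite !subrr.
case: (ltnP m i) => [mi|im]; last by rewrite spliceS_eq ?eq_down // => k l _ _; rewrite !subrr.
move=> k l ik il; have mk := leq_trans mi ik; have ml := leq_trans mi il.
apply: (downstream_impartiality_off (p := m)) => //; try exact: splice_inD.
  by move=> j; apply: spliceS_off.
by rewrite (splice_geq _ _ (ltnW mk)) (splice_geq _ _ (ltnW ml)) (e_const k l).
Qed.

End OneAgentChanges.

Hypothesis Rl_rule : is_rule Rl.

Lemma rule_zero (k : 'I_n) : Rl (fun=> 0) k = 0.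
Proof.
have [Rl_ge0 [sum_eq _]] := Rl_rule (fun=> lexx 0).
rewrite [RHS in _ = RHS]big1 // in sum_eq.
exact: (psumr_eq0P (P := xpredT) (fun j _ => Rl_ge0 j) sum_eq).
Qed.

Lemma rule_sum_shift (i : nat) e e' d : inD e -> inD e' ->
  (forall k : 'I_n, (i <= k)%N -> e k = e' k) ->
  (forall k : 'I_n, (i <= k)%N -> Rl e' k - Rl e k = d) ->
  \sum_(k < n | (k < i)%N) (Rl e' k - Rl e k) + d *+ (n - i)
  = \sum_(k < n | (k < i)%N) (e' k - e k).
Proof.
move=> De De' eq_down shift; have [[_ [sum_e _]] [_ [sum_e' _]]] := (Rl_rule De, Rl_rule De').
have : \sum_(k < n) (Rl e' k - Rl e k) = \sum_(k < n) (e' k - e k).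
  by rewrite !sumrB sum_e sum_e'.
rewrite !(sum_ord_split_at _ i) (eq_bigr _ shift) sum_ord_geq_const => ->.
by rewrite [X in _ + X]big1 ?addr0 // => k /eq_down ->; rewrite subrr.
Qed.

Hypotheses (UI : upstream_invariance Rl) (DI : downstream_impartiality Rl)
  (BAL : balance Rl).

(* Downstream impartiality equalizes the agents downstream of [i]; balance equalizes [i] with them. *)
Lemma rule_point_inflow_downstream (i : 'I_n) c : 0 <= c ->
  forall k : 'I_n, (i <= k)%N -> Rl (point_inflow i c) k = Rl (point_inflow i c) i.
Proof.
move=> c_ge0 k ik; have Du := point_inflow_inD i c_ge0.
have [-> | c_neq0] := eqVneq c 0; first by rewrite point_inflow0 !rule_zero.
have zero_off j : j != i -> 0 = point_inflow i c j by rewrite /point_inflow => /negbTE ->.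
case: (ltnP i n.-1) => [i_last | last_i]; last first.
  by have -> : k = i by apply: val_inj => /=; have := ltn_ord k; lia.
have il : (i.+1 < n)%N by lia.
pose l := Ordinal il.
have down_eq (k' : 'I_n) : (i < k')%N -> Rl (point_inflow i c) k' = Rl (point_inflow i c) l.
  move=> ik'; have := downstream_impartiality_off DI (fun=> lexx 0) Du zero_off (l := l) ik' (ltnSn i).
  by rewrite !rule_zero !subr0; apply.
have bal : Rl (point_inflow i c) i = Rl (point_inflow i c) l.
  have c_gt0 : 0 < point_inflow i c i by rewrite /point_inflow eqxx lt_def c_neq0.
  rewrite (BAL Du i_last c_gt0 (fun j ji => esym (zero_off j ji))).
  rewrite (eq_bigr _ down_eq) sum_ord_geq_const -[Rl _ _ *+ _]mulr_natl mulKf //.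
  by rewrite pnatr_eq0 subn_eq0 -ltnNge.
by move: ik; rewrite leq_eqVlt => /orP[/eqP/val_inj <- // | /down_eq ->].
Qed.

Lemma rule_point_inflow (i : 'I_n) c : 0 <= c -> Rl (point_inflow i c) i = c / (n - i)%:R.
Proof.
move=> c_ge0; have Du := point_inflow_inD i c_ge0.
have zero_off j : j != i -> 0 = point_inflow i c j by rewrite /point_inflow => /negbTE ->.
have up0 (k : 'I_n) : (k < i)%N -> Rl (point_inflow i c) k = 0.
  by move=> ki; rewrite -(upstream_invariance_off UI (fun=> lexx 0) Du zero_off ki) rule_zero.
have [_ [sum_eq _]] := Rl_rule Du.
have sum_u : \sum_(j < n) point_inflow i c j = c.
  by rewrite /point_inflow -big_mkcond big_pred1_eq.
move: sum_eq; rewrite sum_u (sum_ord_split_at _ i) big1 => [|k /up0 //].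
rewrite add0r (eq_bigr _ (rule_point_inflow_downstream c_ge0)) sum_ord_geq_const => sum_eq.
apply: (mulIf (natr_sub_ord_neq0 R i)).
by rewrite divfK ?natr_sub_ord_neq0 // mulr_natr sum_eq.
Qed.

Lemma rule_shapley_step (i : 'I_n) :
  (forall k : 'I_n, (k < i)%N -> forall e, inD e -> Rl e k = shapley e k) ->
  forall e, inD e -> Rl e i = shapley e i.
Proof.
move=> IH e De; set c := e i.
pose h := splice i (fun=> c) e; pose h0 : profile R n := splice i (fun=> c) (fun=> 0).
have Dh : inD h := splice_inD i (fun=> De i) De.
have Dh0 : inD h0 := splice_inD i (fun=> De i) (fun=> lexx 0).
have h_up (j : 'I_n) : (j < i)%N -> h j = e j by move=> ji; rewrite /h /splice ji.
have h0_up (j : 'I_n) : (j < i)%N -> h0 j = 0 by move=> ji; rewrite /h0 /splice ji.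
have h_down (j : 'I_n) : (i <= j)%N -> h j = c by move=> ij; rewrite /h splice_geq.
have h0_down (j : 'I_n) : (i <= j)%N -> h0 j = c by move=> ij; rewrite /h0 splice_geq.
have eq_down (j : 'I_n) : (i <= j)%N -> h0 j = h j by move=> ij; rewrite h_down ?h0_down.
have Rl_e : Rl e i = Rl h i.
  apply: (rule_agree_upstream UI De Dh _ (leqnn i)).
  by apply: agree_upto => [j /h_up ->|]; rewrite ?h_down.
have Rl_h0 : Rl h0 i = c / (n - i)%:R.
  rewrite -rule_point_inflow ?De //.
  apply: (rule_agree_upstream UI Dh0 (point_inflow_inD _ (De i)) _ (leqnn i)).
  apply: agree_upto => [j ji|]; last by rewrite h0_down // /point_inflow eqxx.
  by rewrite h0_up // /point_inflow -val_eqE (ltn_eqF ji).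
have shift (k : 'I_n) : (i <= k)%N -> Rl h k - Rl h0 k = Rl h i - Rl h0 i.
  move=> ik; apply: (rule_shift_downstream DI Dh0 Dh eq_down _ ik (leqnn i)).
  by move=> j j' ij ij'; rewrite !h0_down.
have upstream (k : 'I_n) : (k < i)%N -> Rl h k - Rl h0 k = shapley e k.
  move=> ki; have below_i (j : 'I_n) (jk : (j <= k)%N) := leq_ltn_trans jk ki.
  rewrite !IH // (@shapley_eq_upstream _ _ h e) => [|j /below_i /h_up //].
  by rewrite (@shapley_eq_upstream _ _ h0 (fun=> 0)) ?shapley0 ?subr0 // => j /below_i /h0_up.
have upstream_inflow :
    \sum_(k < n | (k < i)%N) (h k - h0 k) = \sum_(k < n | (k < i)%N) e k.
  by apply: eq_bigr => k ki; rewrite h_up ?h0_up ?subr0.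
have := rule_sum_shift Dh0 Dh eq_down shift.
rewrite (eq_bigr _ upstream) upstream_inflow => gap.
by rewrite Rl_e (shapley_from_upstream_sum gap) -Rl_h0 subrK.
Qed.

Lemma rule_eq_shapley e : inD e -> forall i, Rl e i = shapley e i.
Proof.
move=> De i; have [m im] := ubnP i; elim: m i im e De => // m IH i im.
by apply: rule_shapley_step => k ki; apply: IH; apply: leq_trans ki im.
Qed.

End Uniqueness.

Section ShapleyRule.
Variables (R : realType) (n : nat) (Rl : profile R n -> profile R n).
Hypothesis Rl_shapley : forall e, inD e -> forall i, Rl e i = shapley e i.

Lemma shapley_scale_invariance : scale_invariance Rl.
Proof.
move=> e De g g_ge0 i; have Dge : inD (fun j => g * e j) by move=> j; apply: mulr_ge0.
by rewrite !Rl_shapley // /shapley mulr_sumr; apply: eq_bigr => j _; rewrite mulrA.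
Qed.

Lemma shapley_downstream_impartiality : downstream_impartiality Rl.
Proof.
move=> e e' De De' i [_ eq_off] k l ik il _.
by rewrite !Rl_shapley // !(shapley_change_at eq_off) // ltnW.
Qed.

Lemma shapley_upstream_invariance : upstream_invariance Rl.
Proof.
move=> e e' De De' i [_ eq_off] k ki; rewrite !Rl_shapley //.
apply: shapley_eq_upstream => j jk; apply: eq_off.
by apply: contraTneq (leq_ltn_trans jk ki) => ->; rewrite ltnn.
Qed.

Lemma shapley_balance : balance Rl.
Proof.
move=> e De i i_last _ zero_off; rewrite !Rl_shapley // (shapley_point_inflow zero_off) //.
rewrite (eq_bigr (fun=> e i / (n - i)%:R)) => [|k ik]; last first.
  by rewrite Rl_shapley // (shapley_point_inflow zero_off) // ltnW.
rewrite sum_ord_geq_const -[(e i / _) *+ _]mulr_natl mulKf // pnatr_eq0 subn_eq0 -ltnNge; lia.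
Qed.

End ShapleyRule.

Theorem theorem1 (R : realType) (n : nat) (hn : (2 <= n)%N)
  (Rl : profile R n -> profile R n) (hR : is_rule Rl) :
  (scale_invariance Rl /\ downstream_impartiality Rl /\
   upstream_invariance Rl /\ balance Rl)
  <-> (forall e, inD e -> forall i, Rl e i = shapley e i).
Proof.
split=> [[_ [DI [UI BAL]]] | Rl_shapley].
  exact: rule_eq_shapley.
split; first exact: shapley_scale_invariance.
split; first exact: shapley_downstream_impartiality.
split; first exact: shapley_upstream_invariance.
exact: shapley_balance.
Qed.
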